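(* Fix $\mu,\nu,\delta>0$ and $\beta\in\mathbb{R}$. For $n\in\mathbb{N}_+$ set $\beta_n=\beta/n$ and $\varepsilon_n=n+\delta/n$, and let $f^*_{\varepsilon_n,\beta_n}$ be the map $f_{\varepsilon_n}$ (with parameters $\mu,\nu,\beta_n$) written in the scaled coordinates $(\xi,\eta,\zeta)$ around any of $P_\pm,Q_\pm$ (as defined in the context). Then there is a ball around the origin on which $f^*_{\varepsilon_n,\beta_n}$ converges, as $n\to\infty$ (uniformly, together with its Taylor expansion), to the quadratic map $\xi'=\xi+2\pi\mu\eta$, $\eta'=\eta+2\pi\nu\zeta'$, $\zeta'=\zeta+\delta-2\pi^2\xi^2-2\pi\sigma\beta\eta$ (with $\sigma=+1$ for $P_\pm$, $\sigma=-1$ for $Q_\pm$), which is linearly conjugate to $M_{\varphi,a}$ in the case of $P_\pm$ and to $M_{\varphi,-a}$ in the case of $Q_\pm$, where $\varphi=\pi(32\mu^2\nu^2\delta)^{1/6}$ and $a=\beta\left(\frac{2\nu}{\delta\mu^2}\right)^{1/3}$.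
   Context: Let $\psi:\mathbb{R}\to\mathbb{R}$ be a real-analytic degree-one circle map ($\psi(z+1)=\psi(z)+1$) with $\psi(z)-z$ odd and period-one and $\psi(0)=\psi'(0)=0$. For parameters $\varepsilon,\mu,\nu,\beta$, $f_\varepsilon:\mathbb{T}^2\times\mathbb{R}\to\mathbb{T}^2\times\mathbb{R}$ is $z'=z+\varepsilon(\cos(2\pi x)-\beta\sin(2\pi y))$, $y'=y+\nu\sin(2\pi z')$, $x'=x+\mu\sin(2\pi y)+\psi(z')$ ($x,y$ mod 1). The points $P_+=(0,0,0)$, $P_-=(\tfrac12,0,0)$, $Q_+=(0,\tfrac12,0)$, $Q_-=(\tfrac12,\tfrac12,0)$ are fixed point accelerator modes at $\varepsilon=n$, with $z$-jumps $+n$ ($P_+,Q_+$) and $-n$ ($P_-,Q_-$). The scaled coordinates are $(\xi,\eta,\zeta)=n(x,y,z)$ near $P_+$, $n(\tfrac12-x,-y,-z)$ near $P_-$, $n(-x,y-\tfrac12,z)$ near $Q_+$, $n(x-\tfrac12,\tfrac12-y,-z)$ near $Q_-$, and in these coordinates the integer $z$-jump of the accelerator mode is removed. The Michelson map $M_{\varphi,a}$ is $(u,v,w)\mapsto(u',v',w')$ with $w'=w+\varphi(1-u^2-av)$, $v'=v+\varphi w'$, $u'=u+\varphi v$. *)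

From Stdlib Require Import Reals List.
Open Scope R_scope.

Definition R3 := (R * R * R)%type.

Inductive idx3 := I1 | I2 | I3.

Definition coord (i : idx3) (p : R3) : R :=
  match p with (a, b, c) =>
    match i with I1 => a | I2 => b | I3 => c end end.

Definition upd (p : R3) (i : idx3) (t : R) : R3 :=
  match p with (a, b, c) =>
    match i with I1 => (t, b, c) | I2 => (a, t, c) | I3 => (a, b, t) end end.

Definition real_analytic (g : R -> R) : Prop :=
  forall x0 : R, exists r : R, 0 < r /\ exists an : nat -> R,
    forall x, Rabs (x - x0) < r -> Pser an (x - x0) (g x).

(** Lift to R^3 of the map f_eps on T^2 x R (x, y taken mod 1 on the torus);
    parameters eps, mu, nu, beta. *)
Definition f_lift (psi : R -> R) (eps mu nu beta : R) (p : R3) : R3 :=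
  match p with (x, y, z) =>
    let z' := z + eps * (cos (2 * PI * x) - beta * sin (2 * PI * y)) in
    let y' := y + nu * sin (2 * PI * z') in
    let x' := x + mu * sin (2 * PI * y) + psi z' in
    (x', y', z')
  end.

Inductive accel := Pplus | Pminus | Qplus | Qminus.

Definition accel_sign (pt : accel) : R :=
  match pt with Pplus | Pminus => 1 | Qplus | Qminus => -1 end.

(** sign of the z-jump (+n for P_+, Q_+ ; -n for P_-, Q_-) *)
Definition jump_sign (pt : accel) : R :=
  match pt with Pplus | Qplus => 1 | Pminus | Qminus => -1 end.

Definition to_orig (pt : accel) (n : R) (q : R3) : R3 :=
  match q with (xi, eta, zeta) =>
    match pt with
    | Pplus  => (xi / n, eta / n, zeta / n)
    | Pminus => (/2 - xi / n, - (eta / n), - (zeta / n))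
    | Qplus  => (- (xi / n), /2 + eta / n, zeta / n)
    | Qminus => (/2 + xi / n, /2 - eta / n, - (zeta / n))
    end
  end.

Definition to_scaled (pt : accel) (n : R) (p : R3) : R3 :=
  match p with (x, y, z) =>
    match pt with
    | Pplus  => (n * x, n * y, n * z)
    | Pminus => (n * (/2 - x), n * (- y), n * (- z))
    | Qplus  => (n * (- x), n * (y - /2), n * z)
    | Qminus => (n * (x - /2), n * (/2 - y), n * (- z))
    end
  end.

(** Removal of the integer jump (s n, 0, s n) of the lift at the accelerator
    mode (the x-part is an integer, i.e. trivial on the torus). *)
Definition remove_jump (pt : accel) (n : R) (p : R3) : R3 :=
  match p with (x, y, z) =>
    (x - jump_sign pt * n, y, z - jump_sign pt * n) end.

Definition f_star (psi : R -> R) (mu nu beta delta : R) (pt : accel) (n : nat)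
  (q : R3) : R3 :=
  let nr := INR n in
  to_scaled pt nr
    (remove_jump pt nr
       (f_lift psi (nr + delta / nr) mu nu (beta / nr) (to_orig pt nr q))).

Definition quad_limit (mu nu beta delta s : R) (q : R3) : R3 :=
  match q with (xi, eta, zeta) =>
    let zeta' := zeta + delta - 2 * PI ^ 2 * xi ^ 2 - 2 * PI * s * beta * eta in
    let eta' := eta + 2 * PI * nu * zeta' in
    let xi' := xi + 2 * PI * mu * eta in
    (xi', eta', zeta')
  end.

Definition michelson (phi a : R) (p : R3) : R3 :=
  match p with (u, v, w) =>
    let w' := w + phi * (1 - u ^ 2 - a * v) in
    let v' := v + phi * w' in
    let u' := u + phi * v in
    (u', v', w')
  end.

Definition lin3 (A : idx3 -> idx3 -> R) (p : R3) : R3 :=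
  let row i := A i I1 * coord I1 p + A i I2 * coord I2 p + A i I3 * coord I3 p in
  (row I1, row I2, row I3).

Definition det3 (A : idx3 -> idx3 -> R) : R :=
    A I1 I1 * (A I2 I2 * A I3 I3 - A I2 I3 * A I3 I2)
  - A I1 I2 * (A I2 I1 * A I3 I3 - A I2 I3 * A I3 I1)
  + A I1 I3 * (A I2 I1 * A I3 I2 - A I2 I2 * A I3 I1).

Definition lin_conj (F G : R3 -> R3) : Prop :=
  exists A : idx3 -> idx3 -> R, det3 A <> 0 /\
    forall p, G (lin3 A p) = lin3 A (F p).

(** Iterated partial derivatives on a domain D:
    HasPartial D [i1; ...; ik] f g  means g = d_{ik} ... d_{i1} f on D. *)
Inductive HasPartial (D : R3 -> Prop) : list idx3 -> (R3 -> R) -> (R3 -> R) -> Prop :=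
| hp_nil (f : R3 -> R) : HasPartial D nil f f
| hp_cons (i : idx3) (l : list idx3) (f h g : R3 -> R) :
    (forall p, D p -> derivable_pt_lim (fun t => f (upd p i t)) (coord i p) (h p)) ->
    HasPartial D l h g -> HasPartial D (i :: l) f g.

Definition ball0 (r : R) (p : R3) : Prop :=
  coord I1 p ^ 2 + coord I2 p ^ 2 + coord I3 p ^ 2 < r ^ 2.

Definition conv_with_derivs (D : R3 -> Prop) (F : nat -> R3 -> R3) (G : R3 -> R3) : Prop :=
  forall (c : idx3) (l : list idx3),
    exists g : R3 -> R, HasPartial D l (fun p => coord c (G p)) g /\
    forall e : R, 0 < e -> exists N : nat, forall n : nat, (N <= n)%nat ->
      exists gn : R3 -> R, HasPartial D l (fun p => coord c (F n p)) gn /\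
        forall p, D p -> Rabs (gn p - g p) < e.

From Pilot Require Import Defs.
From Stdlib Require Import Reals Lra Lia FunctionalExtensionality.
From Coquelicot Require Import Coquelicot.
Open Scope R_scope.

(** In the scaled coordinates, [f_star] involves the sine and [psi] only through the blow-ups
    [t |-> n d(t/n)] of smooth functions [d] with [d 0 = 0], and [eps_n] only through
    [eps_n / n = 1 + delta / n^2].  A blow-up converges, uniformly on compact sets and together
    with all its derivatives, to the linear function [t |-> d'(0) t].  Uniform convergence with
    all partial derivatives on a bounded set, towards bounded limits, is preserved by sums,
    products and composition with such families, so [f_star] converges to the quadratic map,
    where [psi] disappears since [psi'(0) = 0].  The modes [P_-], [Q_-] reduce to [P_+], [Q_+]
    because the lift commutes with [(x, y, z) |-> (1/2 - x, - y, - z)] ([psi] odd) and with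
    [y |-> y + 1].  Finally a diagonal linear change of variables conjugates the quadratic map
    to the Michelson map, the exponents [1/6] and [1/3] being exactly those that make the
    coefficients match. *)

(** * Uniform convergence and jets *)

Definition unif_cvg_on {T : Type} (P : T -> Prop) (F : nat -> T -> R) (G : T -> R) : Prop :=
  forall e, 0 < e -> eventually (fun n => forall p, P p -> Rabs (F n p - G p) < e).

Lemma eventually_and (P Q : nat -> Prop) :
  eventually P -> eventually Q -> eventually (fun n => P n /\ Q n).
Proof. apply filter_and. Qed.

Lemma unif_cvg_on_inv_rate {T : Type} (P : T -> Prop) F G (C : R) :
  (forall n, (1 <= n)%nat -> forall p, P p -> Rabs (F n p - G p) <= C / INR n) ->
  unif_cvg_on P F G.
Proof.
  intros HC e He. destruct (INR_unbounded (C / e)) as [N HN].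
  exists (S N). intros n Hn p Hp.
  assert (Hn1 : (1 <= n)%nat) by lia.
  assert (HNn : INR N < INR n) by (apply lt_INR; lia).
  assert (Hpos : 0 < INR n) by (apply lt_0_INR; lia).
  apply Rle_lt_trans with (C / INR n); [now apply HC|].
  assert (HCe : C = C / e * e) by (field; lra).
  apply Rmult_lt_reg_r with (INR n); [exact Hpos|].
  replace (C / INR n * INR n) with C by (field; lra). nra.
Qed.

Lemma unif_cvg_on_linear_rate {T : Type} (P : T -> Prop) F G (K : R) :
  (forall eta, 0 < eta <= 1 ->
     eventually (fun n => forall p, P p -> Rabs (F n p - G p) <= K * eta)) ->
  unif_cvg_on P F G.
Proof.
  intros HK e He. set (eta := Rmin 1 (e / (Rabs K + 1))).
  pose proof (Rabs_pos K) as HK0. pose proof (Rle_abs K).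
  assert (Heta : 0 < eta <= 1)
    by (split; [apply Rmin_glb_lt; [lra | apply Rdiv_lt_0_compat; lra] | apply Rmin_l]).
  assert (Heta_e : Rabs K * eta < e).
  { apply Rle_lt_trans with (Rabs K * (e / (Rabs K + 1))).
    - apply Rmult_le_compat_l; [lra | apply Rmin_r].
    - apply Rmult_lt_reg_r with (Rabs K + 1); [lra|].
      replace (Rabs K * (e / (Rabs K + 1)) * (Rabs K + 1)) with (Rabs K * e) by (field; lra).
      nra. }
  generalize (HK eta Heta). apply filter_imp. intros n Hn p Hp.
  specialize (Hn p Hp). nra.
Qed.

(** [d k] is the [k]-th derivative of the smooth function [d 0]. *)
Definition jet (d : nat -> R -> R) : Prop :=
  forall k x, derivable_pt_lim (d k) x (d (S k) x).

Section Jet.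
Variable d : nat -> R -> R.
Hypothesis d_jet : jet d.

Lemma jet_bounded k K : exists C, forall t, Rabs t <= K -> Rabs (d k t) <= C.
Proof.
  destruct (Rlt_or_le K 0) as [HK|HK].
  - exists 0. intros t Ht. pose proof (Rabs_pos t). lra.
  - destruct (continuity_ab_maj (fun t => Rabs (d k t)) (- K) K) as [M [HM _]]; [lra| |].
    + intros c _. apply (continuity_pt_comp (d k) Rabs); [|apply Rcontinuity_abs].
      exact (derivable_continuous_pt _ _ (exist _ _ (d_jet k c))).
    + exists (Rabs (d k M)). intros t Ht. apply HM. now apply Rabs_le_between.
Qed.

Lemma jet_MVT k s t : exists c, Rabs c <= Rmax (Rabs s) (Rabs t) /\
  d k t - d k s = d (S k) c * (t - s).
Proof.
  assert (Hbetween : forall c, s <= c <= t \/ t <= c <= s -> Rabs c <= Rmax (Rabs s) (Rabs t)).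
  { intros c Hc. pose proof (Rmax_l (Rabs s) (Rabs t)). pose proof (Rmax_r (Rabs s) (Rabs t)).
    pose proof (Rle_abs s). pose proof (Rle_abs t). pose proof (Rabs_maj2 s). pose proof (Rabs_maj2 t).
    apply Rabs_le_between. lra. }
  destruct (Rtotal_order s t) as [Hlt|[Heq|Hgt]].
  - destruct (MVT_cor2 (d k) (d (S k)) s t Hlt) as [c [E Hc]]; [intros; apply d_jet|].
    exists c. split; [apply Hbetween; lra | exact E].
  - subst. exists t. split; [apply Rmax_l | ring].
  - destruct (MVT_cor2 (d k) (d (S k)) t s Hgt) as [c [E Hc]]; [intros; apply d_jet|].
    exists c. split; [apply Hbetween; lra | lra].
Qed.

Lemma jet_lipschitz k K : exists L, 0 <= L /\ forall s t, Rabs s <= K -> Rabs t <= K ->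
  Rabs (d k t - d k s) <= L * Rabs (t - s).
Proof.
  destruct (jet_bounded (S k) K) as [C HC].
  exists (Rabs C). split; [apply Rabs_pos|]. intros s t Hs Ht.
  destruct (jet_MVT k s t) as [c [Hc ->]]. rewrite Rabs_mult.
  apply Rmult_le_compat_r; [apply Rabs_pos|].
  eapply Rle_trans; [apply HC | apply Rle_abs].
  eapply Rle_trans; [exact Hc | now apply Rmax_lub].
Qed.

End Jet.

Definition jet_cvg (dn : nat -> nat -> R -> R) (d : nat -> R -> R) : Prop :=
  (forall n, jet (dn n)) /\ jet d /\
  forall k K, unif_cvg_on (fun t => Rabs t <= K) (fun n => dn n k) (d k).

Lemma jet_cvg_shift dn d :
  jet_cvg dn d -> jet_cvg (fun n k => dn n (S k)) (fun k => d (S k)).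
Proof.
  intros [Hdn [Hd Hcvg]]. split; [|split].
  - intros n k x. apply Hdn.
  - intros k x. apply Hd.
  - intros k. apply Hcvg.
Qed.

(** The jet of [t |-> n d(t/n)], the blow-up of [d] at scale [1/n]. *)
Definition rescale (d : nat -> R -> R) (n k : nat) (t : R) : R :=
  INR n * (/ INR n) ^ k * d k (t / INR n).

Definition tangent_jet (d : nat -> R -> R) (k : nat) (t : R) : R :=
  match k with 0%nat => d 1%nat 0 * t | 1%nat => d 1%nat 0 | _ => 0 end.

Lemma jet_rescale d n : jet d -> jet (rescale d n).
Proof.
  intros Hd k x. unfold rescale.
  replace (INR n * (/ INR n) ^ S k * d (S k) (x / INR n))
    with (INR n * (/ INR n) ^ k * (d (S k) (x / INR n) * / INR n)) by (simpl; ring).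
  apply (derivable_pt_lim_scal (fun t => d k (t / INR n))).
  apply (derivable_pt_lim_comp (fun t => t / INR n) (d k)); [|apply Hd].
  apply is_derive_Reals. auto_derive; [exact I | ring].
Qed.

Lemma jet_tangent_jet d : jet (tangent_jet d).
Proof.
  intros [|[|k]] x; simpl.
  - pose proof (derivable_pt_lim_scal id (d 1%nat 0) x 1 (derivable_pt_lim_id x)) as H.
    rewrite Rmult_1_r in H. exact H.
  - apply derivable_pt_lim_const.
  - apply derivable_pt_lim_const.
Qed.

Lemma Rabs_div_INR_le n t K : (1 <= n)%nat -> Rabs t <= K ->
  Rabs (t / INR n) <= K / INR n /\ K / INR n <= K.
Proof.
  intros Hn Ht. assert (H1 : 1 <= INR n) by (apply (le_INR 1); lia).
  assert (HK : 0 <= K) by (pose proof (Rabs_pos t); lra).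
  rewrite Rabs_div, (Rabs_pos_eq (INR n)) by lra. split.
  - apply Rmult_le_compat_r; [left; apply Rinv_0_lt_compat; lra | exact Ht].
  - apply Rmult_le_reg_r with (INR n); [lra|].
    replace (K / INR n * INR n) with K by (field; lra). nra.
Qed.

Lemma rescale_tangent_jet_bound d k K : jet d -> d 0%nat 0 = 0 ->
  exists C, forall n, (1 <= n)%nat -> forall t, Rabs t <= K ->
    Rabs (rescale d n k t - tangent_jet d k t) <= C / INR n.
Proof.
  intros Hd Hd0.
  destruct (jet_lipschitz d Hd 1 K) as [L [HL0 HL]].
  destruct (jet_bounded d Hd k K) as [B HB].
  destruct k as [|[|k]]; cbn [tangent_jet].
  - exists (K * (L * K)). intros n Hn t Ht.
    destruct (Rabs_div_INR_le n t K Hn Ht) as [Htn HKn].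
    assert (H1 : 1 <= INR n) by (apply (le_INR 1); lia).
    pose proof (Rabs_pos t).
    destruct (jet_MVT d Hd 0 0 (t / INR n)) as [c [Hc E]].
    rewrite Hd0, Rabs_R0, Rmax_right in * by apply Rabs_pos.
    replace (rescale d n 0 t - d 1%nat 0 * t) with (t * (d 1%nat c - d 1%nat 0))
      by (unfold rescale; simpl; rewrite Rminus_0_r in E; rewrite E; field; lra).
    rewrite Rabs_mult. apply Rle_trans with (K * (L * (K / INR n))); [|right; field; lra].
    apply Rmult_le_compat; try apply Rabs_pos; [exact Ht|].
    apply Rle_trans with (L * Rabs (c - 0)); [apply HL; rewrite ?Rabs_R0; lra|].
    rewrite Rminus_0_r. apply Rmult_le_compat_l; lra.
  - exists (L * K). intros n Hn t Ht.
    destruct (Rabs_div_INR_le n t K Hn Ht) as [Htn HKn].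
    assert (H1 : 1 <= INR n) by (apply (le_INR 1); lia).
    pose proof (Rabs_pos t).
    replace (rescale d n 1 t) with (d 1%nat (t / INR n)) by (unfold rescale; simpl; field; lra).
    apply Rle_trans with (L * Rabs (t / INR n - 0)); [apply HL; rewrite ?Rabs_R0; lra|].
    rewrite Rminus_0_r. unfold Rdiv at 2. rewrite Rmult_assoc. apply Rmult_le_compat_l; lra.
  - exists (Rabs B). intros n Hn t Ht.
    destruct (Rabs_div_INR_le n t K Hn Ht) as [Htn HKn].
    assert (H1 : 1 <= INR n) by (apply (le_INR 1); lia).
    assert (Hinv : 0 < / INR n <= 1)
      by (split; [apply Rinv_0_lt_compat | rewrite <- Rinv_1; apply Rinv_le_contravar]; lra).
    replace (rescale d n (S (S k)) t - 0)
      with (/ INR n * ((/ INR n) ^ k * d (S (S k)) (t / INR n)))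
      by (unfold rescale; simpl; field; lra).
    rewrite !Rabs_mult, (Rabs_pos_eq (/ INR n)), (Rabs_pos_eq ((/ INR n) ^ k))
      by (try apply pow_le; lra).
    unfold Rdiv. rewrite Rmult_comm. apply Rmult_le_compat_r; [lra|].
    assert (Hpow : 0 <= (/ INR n) ^ k <= 1)
      by (split; [apply pow_le | rewrite <- (pow1 k); apply pow_incr]; lra).
    assert (HBt := HB (t / INR n) ltac:(lra)). pose proof (Rle_abs B).
    pose proof (Rabs_pos (d (S (S k)) (t / INR n))). nra.
Qed.

Lemma jet_cvg_rescale d : jet d -> d 0%nat 0 = 0 -> jet_cvg (rescale d) (tangent_jet d).
Proof.
  intros Hd Hd0. split; [|split].
  - intro n. now apply jet_rescale.
  - apply jet_tangent_jet.
  - intros k K. destruct (rescale_tangent_jet_bound d k K Hd Hd0) as [C HC].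
    exact (unif_cvg_on_inv_rate _ _ _ C HC).
Qed.

Definition sin_jet (a : R) (k : nat) (t : R) : R := a ^ k * sin (a * t + INR k * (PI / 2)).

Lemma jet_sin_jet a : jet (sin_jet a).
Proof.
  intros k x. unfold sin_jet. apply is_derive_Reals. auto_derive; [exact I|].
  rewrite S_INR, cos_sin. simpl. ring_simplify. f_equal. f_equal. ring.
Qed.

Lemma sin_jet_0 a : sin_jet a 0 0 = 0.
Proof. unfold sin_jet. simpl. rewrite Rmult_0_r, Rmult_0_l, Rplus_0_r, sin_0. ring. Qed.

Lemma sin_jet_1 a : sin_jet a 1 0 = a.
Proof. unfold sin_jet. simpl. rewrite Rmult_0_r, Rmult_1_l, Rplus_0_l, sin_PI2. ring. Qed.

Lemma rescale_sin_jet a n t : rescale (sin_jet a) n 0 t = INR n * sin (a * (t / INR n)).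
Proof. unfold rescale, sin_jet. simpl. rewrite Rmult_0_l, Rplus_0_r. ring. Qed.

Lemma Pser_CV_radius an y l : Pser an y l -> Rbar_le (Rabs y) (CV_radius an).
Proof.
  intro Hser.
  assert (Hterms : is_lim_seq (fun n => an n * y ^ n) 0)
    by (apply ex_series_lim_0, ex_pseries_R; exists l; now apply is_pseries_Reals).
  destruct (Rbar_lt_le_dec (CV_radius an) (Rabs y)) as [Hlt|Hle]; [|exact Hle].
  now destruct (CV_disk_outside an y Hlt).
Qed.

Lemma real_analytic_jet psi : real_analytic psi -> jet (fun k => Derive_n psi k).
Proof.
  intros Han k x. destruct (Han x) as [r [Hr [an Hser]]].
  assert (Hrad : Rbar_lt 0 (CV_radius an)).
  { apply Rbar_lt_le_trans with (Rabs (r / 2)); [simpl; rewrite Rabs_pos_eq; lra|].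
    apply (Pser_CV_radius an (r / 2) (psi (x + r / 2))).
    replace (r / 2) with (x + r / 2 - x) at 1 by ring. apply Hser.
    replace (x + r / 2 - x) with (r / 2) by ring. rewrite Rabs_pos_eq; lra. }
  set (g := fun y => PSeries an (y + - x)).
  assert (Hloc : locally x (fun y => psi y = g y)).
  { exists (mkposreal r Hr). intros y Hy. symmetry. apply is_pseries_unique.
    apply is_pseries_Reals, Hser. exact Hy. }
  assert (Hex : ex_derive (Derive_n g k) x).
  { apply (ex_derive_ext (fun t => Derive_n (PSeries an) k (t + - x))).
    { intro t. symmetry. apply Derive_n_comp_trans. }
    apply (ex_derive_comp (Derive_n (PSeries an) k) (fun t => t + - x)).
    - rewrite Rplus_opp_r. apply (ex_derive_n_PSeries (S k)). now rewrite Rabs_R0.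
    - auto_derive. exact I. }
  apply is_derive_Reals, Derive_correct.
  apply (ex_derive_ext_loc (Derive_n g k)); [|exact Hex].
  generalize (locally_locally x _ Hloc). apply filter_imp.
  intros y Hy. symmetry. now apply Derive_n_ext_loc.
Qed.

(** * Convergence together with all partial derivatives *)

Definition partial (i : idx3) (f : R3 -> R) (p : R3) : R :=
  Derive (fun t => f (upd p i t)) (coord i p).

Definition ex_partial (i : idx3) (f : R3 -> R) : Prop :=
  forall p, derivable_pt_lim (fun t => f (upd p i t)) (coord i p) (partial i f p).

Lemma upd_coord p i : upd p i (coord i p) = p.
Proof. destruct p as [[a b] c]; now destruct i. Qed.

Lemma partial_intro i f h :
  (forall p, derivable_pt_lim (fun t => f (upd p i t)) (coord i p) (h p)) ->
  ex_partial i f /\ partial i f = h.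
Proof.
  intro Hh.
  assert (E : forall p, partial i f p = h p)
    by (intro p; apply is_derive_unique, is_derive_Reals, Hh).
  split; [intro p; rewrite E; apply Hh | now apply functional_extensionality].
Qed.

Lemma partial_const i c : ex_partial i (fun _ => c) /\ partial i (fun _ => c) = (fun _ => 0).
Proof. apply partial_intro. intro p. apply derivable_pt_lim_const. Qed.

Lemma partial_coord i j : ex_partial i (coord j) /\
  partial i (coord j) = (fun _ => match i, j with
                                  | I1, I1 | I2, I2 | I3, I3 => 1 | _, _ => 0 end).
Proof.
  apply partial_intro. intros [[a b] c].
  destruct i, j; simpl; first [apply derivable_pt_lim_id | apply derivable_pt_lim_const].
Qed.

Lemma partial_plus i A B : ex_partial i A -> ex_partial i B ->
  ex_partial i (fun p => A p + B p) /\
  partial i (fun p => A p + B p) = (fun p => partial i A p + partial i B p).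
Proof.
  intros HA HB. apply partial_intro. intro p.
  exact (derivable_pt_lim_plus _ _ _ _ _ (HA p) (HB p)).
Qed.

Lemma partial_mult i A B : ex_partial i A -> ex_partial i B ->
  ex_partial i (fun p => A p * B p) /\
  partial i (fun p => A p * B p) = (fun p => partial i A p * B p + A p * partial i B p).
Proof.
  intros HA HB. apply partial_intro. intro p.
  pose proof (derivable_pt_lim_mult _ _ _ _ _ (HA p) (HB p)) as H.
  cbv beta in H. now rewrite upd_coord in H.
Qed.

Lemma partial_comp i d A : jet d -> ex_partial i A ->
  ex_partial i (fun p => d 0%nat (A p)) /\
  partial i (fun p => d 0%nat (A p)) = (fun p => d 1%nat (A p) * partial i A p).
Proof.
  intros Hd HA. apply partial_intro. intro p.
  pose proof (Hd 0%nat (A p)) as H1. rewrite <- (upd_coord p i) in H1 at 1.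
  exact (derivable_pt_lim_comp _ _ _ _ _ (HA p) H1).
Qed.

Definition bounded_on {T : Type} (P : T -> Prop) (g : T -> R) : Prop :=
  exists M, forall p, P p -> Rabs (g p) <= M.

Lemma Rabs_mult_sub_le a A b B eta M : Rabs (a - A) < eta -> Rabs (b - B) < eta ->
  Rabs A <= M -> Rabs B <= M -> eta <= 1 -> Rabs (a * b - A * B) <= eta * (2 * M + 1).
Proof.
  intros Ha Hb HA HB Heta.
  replace (a * b - A * B) with ((a - A) * b + A * (b - B)) by ring.
  eapply Rle_trans; [apply Rabs_triang|]. rewrite !Rabs_mult.
  assert (Hb' : Rabs b <= M + 1).
  { replace b with (B + (b - B)) by ring. eapply Rle_trans; [apply Rabs_triang|]. lra. }
  pose proof (Rabs_pos (a - A)). pose proof (Rabs_pos A). pose proof (Rabs_pos b).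
  pose proof (Rabs_pos (b - B)).
  assert (Rabs (a - A) * Rabs b <= eta * (M + 1)) by (apply Rmult_le_compat; lra).
  assert (Rabs A * Rabs (b - B) <= M * eta) by (apply Rmult_le_compat; lra).
  lra.
Qed.

Section Calculus.

Variable B : R3 -> Prop.
Hypothesis coord_bounded : forall i, bounded_on B (coord i).

Definition C0_cvg (F : nat -> R3 -> R) (G : R3 -> R) : Prop :=
  bounded_on B G /\ unif_cvg_on B F G.

(** Limits are required to be bounded on [B]: this is what makes products and compositions
    of convergent families converge. *)
Fixpoint Ck_cvg (k : nat) (F : nat -> R3 -> R) (G : R3 -> R) : Prop :=
  C0_cvg F G /\
  match k with
  | 0%nat => True
  | S k => forall i, ex_partial i G /\ eventually (fun n => ex_partial i (F n)) /\
             Ck_cvg k (fun n => partial i (F n)) (partial i G)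
  end.

Lemma C0_cvg_eventually_ext F F' G :
  eventually (fun n => F n = F' n) -> C0_cvg F G -> C0_cvg F' G.
Proof.
  intros HFF' [HG HF]. split; [exact HG|]. intros e He.
  generalize (eventually_and _ _ HFF' (HF e He)). apply filter_imp.
  intros n [-> Hn]. exact Hn.
Qed.

Lemma Ck_cvg_eventually_ext k : forall F F' G,
  eventually (fun n => F n = F' n) -> Ck_cvg k F G -> Ck_cvg k F' G.
Proof.
  induction k as [|k IHk]; intros F F' G HFF' [H0 Hk].
  - split; [exact (C0_cvg_eventually_ext F F' G HFF' H0) | exact I].
  - split; [exact (C0_cvg_eventually_ext F F' G HFF' H0)|].
    intro i. destruct (Hk i) as [HGi [HFi Hcvg]]. split; [exact HGi|]. split.
    + generalize (eventually_and _ _ HFF' HFi). apply filter_imp. now intros n [<- Hn].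
    + apply (IHk (fun n => partial i (F n))); [|exact Hcvg].
      generalize HFF'. apply filter_imp. now intros n ->.
Qed.

Lemma Ck_cvg_S k F G : Ck_cvg (S k) F G -> Ck_cvg k F G.
Proof.
  revert F G. induction k as [|k IHk]; intros F G [H0 Hk]; split; try easy.
  intro i. destruct (Hk i) as [HGi [HFi Hcvg]]. auto.
Qed.

Lemma Ck_cvg_ext k F F' G G' : (forall n p, F n p = F' n p) -> (forall p, G p = G' p) ->
  Ck_cvg k F G -> Ck_cvg k F' G'.
Proof.
  intros EF EG.
  replace F' with F
    by (apply functional_extensionality; intro n; now apply functional_extensionality).
  now replace G' with G by now apply functional_extensionality.
Qed.

Lemma C0_cvg_const c (c0 : R) : is_lim_seq c c0 -> C0_cvg (fun n _ => c n) (fun _ => c0).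
Proof.
  intro Hc. apply is_lim_seq_spec in Hc. unfold is_lim_seq' in Hc. split.
  - exists (Rabs c0). intros. apply Rle_refl.
  - intros e He. generalize (Hc (mkposreal e He)). apply filter_imp. now intros n Hn p _.
Qed.

Lemma C0_cvg_coord j : C0_cvg (fun _ => coord j) (coord j).
Proof.
  split; [apply coord_bounded|]. intros e He. exists 0%nat. intros n _ p _.
  rewrite Rminus_diag, Rabs_R0. exact He.
Qed.

Lemma C0_cvg_plus A GA A' GA' : C0_cvg A GA -> C0_cvg A' GA' ->
  C0_cvg (fun n p => A n p + A' n p) (fun p => GA p + GA' p).
Proof.
  intros [[M HM] HA] [[M' HM'] HA']. split.
  - exists (M + M'). intros p Hp. eapply Rle_trans; [apply Rabs_triang|].
    specialize (HM p Hp). specialize (HM' p Hp). lra.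
  - intros e He.
    generalize (eventually_and _ _ (HA (e / 2) ltac:(lra)) (HA' (e / 2) ltac:(lra))).
    apply filter_imp. intros n [Hn Hn'] p Hp.
    replace (A n p + A' n p - (GA p + GA' p)) with ((A n p - GA p) + (A' n p - GA' p)) by ring.
    eapply Rle_lt_trans; [apply Rabs_triang|].
    specialize (Hn p Hp). specialize (Hn' p Hp). lra.
Qed.

Lemma C0_cvg_mult A GA A' GA' : C0_cvg A GA -> C0_cvg A' GA' ->
  C0_cvg (fun n p => A n p * A' n p) (fun p => GA p * GA' p).
Proof.
  intros [[M0 HM0] HA] [[M0' HM0'] HA'].
  set (M := Rabs M0 + Rabs M0').
  pose proof (Rle_abs M0). pose proof (Rle_abs M0').
  pose proof (Rabs_pos M0). pose proof (Rabs_pos M0').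
  assert (HGA : forall p, B p -> Rabs (GA p) <= M)
    by (intros p Hp; specialize (HM0 p Hp); unfold M; lra).
  assert (HGA' : forall p, B p -> Rabs (GA' p) <= M)
    by (intros p Hp; specialize (HM0' p Hp); unfold M; lra).
  split.
  - exists (M * M). intros p Hp. rewrite Rabs_mult.
    apply Rmult_le_compat; try apply Rabs_pos; auto.
  - apply (unif_cvg_on_linear_rate _ _ _ (2 * M + 1)). intros eta Heta.
    generalize (eventually_and _ _ (HA eta (proj1 Heta)) (HA' eta (proj1 Heta))).
    apply filter_imp. intros n [Hn Hn'] p Hp.
    rewrite (Rmult_comm (2 * M + 1)). apply Rabs_mult_sub_le; auto; apply Heta.
Qed.

Lemma C0_cvg_comp dn d A GA : jet_cvg dn d -> C0_cvg A GA ->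
  C0_cvg (fun n p => dn n 0%nat (A n p)) (fun p => d 0%nat (GA p)).
Proof.
  intros [_ [Hd Hdn]] [[K HK] HA].
  destruct (jet_lipschitz d Hd 0 (K + 1)) as [L [HL0 HL]].
  destruct (jet_bounded d Hd 0 K) as [C HC].
  split; [exists C; intros p Hp; apply HC, HK, Hp|].
  apply (unif_cvg_on_linear_rate _ _ _ (1 + L)). intros eta Heta.
  generalize (eventually_and _ _ (HA eta (proj1 Heta)) (Hdn 0%nat (K + 1) eta (proj1 Heta))).
  apply filter_imp. intros n [Hn Hdnn] p Hp.
  specialize (Hn p Hp). specialize (HK p Hp).
  assert (HAK : Rabs (A n p) <= K + 1).
  { replace (A n p) with (GA p + (A n p - GA p)) by ring.
    eapply Rle_trans; [apply Rabs_triang | lra]. }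
  specialize (Hdnn (A n p) HAK).
  assert (Hlip : Rabs (d 0%nat (A n p) - d 0%nat (GA p)) <= L * Rabs (A n p - GA p))
    by (apply HL; lra).
  replace (dn n 0%nat (A n p) - d 0%nat (GA p)) with
    ((dn n 0%nat (A n p) - d 0%nat (A n p)) + (d 0%nat (A n p) - d 0%nat (GA p))) by ring.
  eapply Rle_trans; [apply Rabs_triang|].
  assert (L * Rabs (A n p - GA p) <= L * eta) by (apply Rmult_le_compat_l; lra).
  lra.
Qed.

Lemma Ck_cvg_S_intro k F G (dF : idx3 -> nat -> R3 -> R) :
  C0_cvg F G -> (forall i, ex_partial i G) ->
  (forall i, eventually (fun n => ex_partial i (F n) /\ partial i (F n) = dF i n)) ->
  (forall i, Ck_cvg k (dF i) (partial i G)) -> Ck_cvg (S k) F G.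
Proof.
  intros H0 HG HF HdF. split; [exact H0|]. intro i. split; [apply HG|]. split.
  - generalize (HF i). apply filter_imp. tauto.
  - apply (Ck_cvg_eventually_ext k (dF i)); [|apply HdF].
    generalize (HF i). apply filter_imp. intros n [_ ->]. reflexivity.
Qed.

Lemma Ck_cvg_const k : forall c (c0 : R), is_lim_seq c c0 ->
  Ck_cvg k (fun n _ => c n) (fun _ => c0).
Proof.
  induction k as [|k IHk]; intros c c0 Hc.
  - split; [now apply C0_cvg_const | exact I].
  - apply (Ck_cvg_S_intro k _ _ (fun _ _ _ => 0)).
    + now apply C0_cvg_const.
    + intro i. apply partial_const.
    + intro i. exists 0%nat. intros n _. apply partial_const.
    + intro i. rewrite (proj2 (partial_const i c0)). apply IHk, is_lim_seq_const.
Qed.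

Lemma Ck_cvg_coord k j : Ck_cvg k (fun _ => coord j) (coord j).
Proof.
  destruct k as [|k].
  - split; [apply C0_cvg_coord | exact I].
  - apply (Ck_cvg_S_intro k _ _ (fun i _ => partial i (coord j))).
    + apply C0_cvg_coord.
    + intro i. apply partial_coord.
    + intro i. exists 0%nat. intros n _. split; [apply partial_coord | reflexivity].
    + intro i. rewrite (proj2 (partial_coord i j)). apply Ck_cvg_const, is_lim_seq_const.
Qed.

Lemma Ck_cvg_plus k : forall A GA A' GA', Ck_cvg k A GA -> Ck_cvg k A' GA' ->
  Ck_cvg k (fun n p => A n p + A' n p) (fun p => GA p + GA' p).
Proof.
  induction k as [|k IHk]; intros A GA A' GA' [HA0 HA] [HA0' HA'].
  - split; [now apply C0_cvg_plus | exact I].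
  - apply (Ck_cvg_S_intro k _ _ (fun i n p => partial i (A n) p + partial i (A' n) p)).
    + now apply C0_cvg_plus.
    + intro i. apply partial_plus; [apply HA | apply HA'].
    + intro i. generalize (eventually_and _ _ (proj1 (proj2 (HA i))) (proj1 (proj2 (HA' i)))).
      apply filter_imp. intros n [Hn Hn']. exact (partial_plus i _ _ Hn Hn').
    + intro i. rewrite (proj2 (partial_plus i GA GA' (proj1 (HA i)) (proj1 (HA' i)))).
      apply IHk; [apply HA | apply HA'].
Qed.

Lemma Ck_cvg_mult k : forall A GA A' GA', Ck_cvg k A GA -> Ck_cvg k A' GA' ->
  Ck_cvg k (fun n p => A n p * A' n p) (fun p => GA p * GA' p).
Proof.
  induction k as [|k IHk]; intros A GA A' GA' HAk HAk'.
  - split; [apply C0_cvg_mult; [apply HAk | apply HAk'] | exact I].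
  - destruct HAk as [HA0 HA], HAk' as [HA0' HA'].
    apply (Ck_cvg_S_intro k _ _
      (fun i n p => partial i (A n) p * A' n p + A n p * partial i (A' n) p)).
    + now apply C0_cvg_mult.
    + intro i. apply partial_mult; [apply HA | apply HA'].
    + intro i. generalize (eventually_and _ _ (proj1 (proj2 (HA i))) (proj1 (proj2 (HA' i)))).
      apply filter_imp. intros n [Hn Hn']. exact (partial_mult i _ _ Hn Hn').
    + intro i. rewrite (proj2 (partial_mult i GA GA' (proj1 (HA i)) (proj1 (HA' i)))).
      apply Ck_cvg_plus; apply IHk; try apply HA; try apply HA';
        apply Ck_cvg_S; split; assumption.
Qed.

Lemma Ck_cvg_minus k A GA A' GA' : Ck_cvg k A GA -> Ck_cvg k A' GA' ->
  Ck_cvg k (fun n p => A n p - A' n p) (fun p => GA p - GA' p).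
Proof.
  intros HA HA'.
  apply (Ck_cvg_ext k (fun n p => A n p + -1 * A' n p) _ (fun p => GA p + -1 * GA' p));
    [intros; ring | intros; ring|].
  apply Ck_cvg_plus; [exact HA|].
  apply Ck_cvg_mult; [|exact HA']. exact (Ck_cvg_const k (fun _ => -1) (-1) (is_lim_seq_const _)).
Qed.

Lemma Ck_cvg_pow k m A GA : Ck_cvg k A GA ->
  Ck_cvg k (fun n p => A n p ^ m) (fun p => GA p ^ m).
Proof.
  intro HA. induction m as [|m IHm].
  - exact (Ck_cvg_const k (fun _ => 1) 1 (is_lim_seq_const 1)).
  - exact (Ck_cvg_mult k _ _ _ _ HA IHm).
Qed.

Lemma Ck_cvg_comp k : forall dn d A GA, jet_cvg dn d -> Ck_cvg k A GA ->
  Ck_cvg k (fun n p => dn n 0%nat (A n p)) (fun p => d 0%nat (GA p)).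
Proof.
  induction k as [|k IHk]; intros dn d A GA Hjet HAk.
  - split; [apply C0_cvg_comp; [exact Hjet | apply HAk] | exact I].
  - pose proof Hjet as [Hdn [Hd _]]. pose proof HAk as [HA0 HA].
    apply (Ck_cvg_S_intro k _ _ (fun i n p => dn n 1%nat (A n p) * partial i (A n) p)).
    + now apply C0_cvg_comp.
    + intro i. apply partial_comp; [exact Hd | apply HA].
    + intro i. generalize (proj1 (proj2 (HA i))). apply filter_imp.
      intros n Hn. exact (partial_comp i (dn n) (A n) (Hdn n) Hn).
    + intro i. rewrite (proj2 (partial_comp i d GA Hd (proj1 (HA i)))).
      apply Ck_cvg_mult; [|apply HA].
      apply (IHk (fun n k => dn n (S k)) (fun k => d (S k))); [now apply jet_cvg_shift|].
      now apply Ck_cvg_S.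
Qed.

End Calculus.

Lemma Ck_cvg_has_partial B l : forall F G, Ck_cvg B (length l) F G ->
  exists g, HasPartial B l G g /\ forall e, 0 < e ->
    eventually (fun n => exists gn, HasPartial B l (F n) gn /\
                           forall p, B p -> Rabs (gn p - g p) < e).
Proof.
  induction l as [|i l IHl]; intros F G [[_ HF] Hk].
  - exists G. split; [constructor|]. intros e He. generalize (HF e He). apply filter_imp.
    intros n Hn. exists (F n). split; [constructor | exact Hn].
  - destruct (Hk i) as [HGi [HFi Hcvg]].
    destruct (IHl _ _ Hcvg) as [g [Hg Hgcvg]]. exists g. split.
    + apply hp_cons with (partial i G); [intros p _; apply HGi | exact Hg].
    + intros e He. generalize (eventually_and _ _ HFi (Hgcvg e He)).
      apply filter_imp. intros n [Hn [gn [Hgn Hclose]]]. exists gn. split; [|exact Hclose].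
      apply hp_cons with (partial i (F n)); [intros p _; apply Hn | exact Hgn].
Qed.

Lemma conv_with_derivs_intro B F G :
  (forall c k, Ck_cvg B k (fun n p => coord c (F n p)) (fun p => coord c (G p))) ->
  conv_with_derivs B F G.
Proof. intros HF c l. exact (Ck_cvg_has_partial B l _ _ (HF c (length l))). Qed.

(** * The map in scaled coordinates *)

Definition half_turn (p : R3) : R3 := match p with (x, y, z) => (/ 2 - x, - y, - z) end.

Definition shift_y (p : R3) : R3 := match p with (x, y, z) => (x, y + 1, z) end.

Lemma f_lift_half_turn psi eps mu nu beta p : (forall z, psi (- z) = - psi z) ->
  f_lift psi eps mu nu beta (half_turn p) = half_turn (f_lift psi eps mu nu beta p).
Proof.
  intro psi_odd. destruct p as [[x y] z]. unfold f_lift, half_turn.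
  replace (2 * PI * (/ 2 - x)) with (- (2 * PI * x) + PI) by field.
  replace (2 * PI * - y) with (- (2 * PI * y)) by ring.
  rewrite neg_cos, cos_neg, sin_neg.
  set (z' := z + eps * (cos (2 * PI * x) - beta * sin (2 * PI * y))).
  replace (- z + eps * (- cos (2 * PI * x) - beta * - sin (2 * PI * y))) with (- z')
    by (unfold z'; ring).
  replace (2 * PI * - z') with (- (2 * PI * z')) by ring.
  rewrite sin_neg, psi_odd. f_equal; f_equal; ring.
Qed.

Lemma f_lift_shift_y psi eps mu nu beta p :
  f_lift psi eps mu nu beta (shift_y p) = shift_y (f_lift psi eps mu nu beta p).
Proof.
  destruct p as [[x y] z]. unfold f_lift, shift_y.
  replace (2 * PI * (y + 1)) with (2 * PI * y + 2 * INR 1 * PI) by (simpl; ring).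
  rewrite sin_period. f_equal; f_equal; ring.
Qed.

Lemma f_star_Pminus psi mu nu beta delta n q : (forall z, psi (- z) = - psi z) ->
  f_star psi mu nu beta delta Defs.Pminus n q = f_star psi mu nu beta delta Defs.Pplus n q.
Proof.
  intro psi_odd. unfold f_star.
  replace (to_orig Defs.Pminus (INR n) q) with (half_turn (to_orig Defs.Pplus (INR n) q))
    by (destruct q as [[xi eta] zeta]; reflexivity).
  rewrite f_lift_half_turn by exact psi_odd.
  destruct (f_lift _ _ _ _ _ _) as [[x y] z]. cbn. f_equal; f_equal; ring.
Qed.

Lemma f_star_Qminus psi mu nu beta delta n q : (forall z, psi (- z) = - psi z) ->
  f_star psi mu nu beta delta Defs.Qminus n q = f_star psi mu nu beta delta Defs.Qplus n q.
Proof.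
  intro psi_odd. unfold f_star.
  replace (to_orig Defs.Qminus (INR n) q) with (shift_y (half_turn (to_orig Defs.Qplus (INR n) q)))
    by (destruct q as [[xi eta] zeta]; cbn; f_equal; f_equal; lra).
  rewrite f_lift_shift_y, f_lift_half_turn by exact psi_odd.
  destruct (f_lift _ _ _ _ _ _) as [[x y] z]. cbn. f_equal; f_equal; field.
Qed.

(** [f_star] at [P_+] ([sg = 1]) and [Q_+] ([sg = -1]), with [r = eps_n / n]; the sines and
    [psi] enter only through the blow-ups [n sin (a t / n)] and [n psi (t / n)]. *)
Definition scaled_map (psi : R -> R) (mu nu beta delta sg : R) (n : nat) (p : R3) : R3 :=
  let r := (INR n + delta / INR n) / INR n in
  let zeta' := coord I3 p + delta
               - 2 * r * rescale (sin_jet PI) n 0 (coord I1 p) ^ 2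
               - sg * beta * r * rescale (sin_jet (2 * PI)) n 0 (coord I2 p) in
  (coord I1 p + mu * rescale (sin_jet (2 * PI)) n 0 (coord I2 p)
     + sg * rescale (Derive_n psi) n 0 zeta',
   coord I2 p + nu * rescale (sin_jet (2 * PI)) n 0 zeta',
   zeta').

Lemma degree_one_nat psi z n :
  (forall z, psi (z + 1) = psi z + 1) -> psi (z + INR n) = psi z + INR n.
Proof.
  intro psi_deg1. induction n as [|n IHn]; [simpl; rewrite !Rplus_0_r; reflexivity|].
  rewrite S_INR, <- !Rplus_assoc, psi_deg1, IHn. reflexivity.
Qed.

Lemma rescale_Derive_n psi n t : rescale (Derive_n psi) n 0 t = INR n * psi (t / INR n).
Proof. unfold rescale. simpl. ring. Qed.

Lemma cos_2PI_sin t : cos (2 * PI * t) = 1 - 2 * sin (PI * t) ^ 2.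
Proof. replace (2 * PI * t) with (2 * (PI * t)) by ring. rewrite cos_2a_sin. ring. Qed.

Lemma f_star_Pplus psi mu nu beta delta n q : (1 <= n)%nat ->
  (forall z, psi (z + 1) = psi z + 1) ->
  f_star psi mu nu beta delta Defs.Pplus n q = scaled_map psi mu nu beta delta 1 n q.
Proof.
  intros Hn psi_deg1. assert (HN : INR n <> 0) by (apply not_0_INR; lia).
  destruct q as [[xi eta] zeta].
  unfold f_star, scaled_map, f_lift, to_orig, remove_jump, to_scaled, jump_sign. cbn [coord].
  rewrite !rescale_sin_jet, rescale_Derive_n, cos_2PI_sin.
  match goal with |- context [psi ?z] => set (z' := z) end.
  set (zeta' := zeta + delta - _ - _).
  assert (Hz' : z' = zeta' / INR n + INR n) by (unfold z', zeta'; field; exact HN).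
  rewrite Hz', degree_one_nat by exact psi_deg1.
  replace (2 * PI * (zeta' / INR n + INR n))
    with (2 * PI * (zeta' / INR n) + 2 * INR n * PI) by ring.
  rewrite sin_period. f_equal; f_equal; field; exact HN.
Qed.

Lemma f_star_Qplus psi mu nu beta delta n q : (1 <= n)%nat ->
  (forall z, psi (z + 1) = psi z + 1) ->
  f_star psi mu nu beta delta Defs.Qplus n q = scaled_map psi mu nu beta delta (-1) n q.
Proof.
  intros Hn psi_deg1. assert (HN : INR n <> 0) by (apply not_0_INR; lia).
  destruct q as [[xi eta] zeta].
  unfold f_star, scaled_map, f_lift, to_orig, remove_jump, to_scaled, jump_sign. cbn [coord].
  replace (2 * PI * - (xi / INR n)) with (- (2 * PI * (xi / INR n))) by ring.
  replace (2 * PI * (/ 2 + eta / INR n)) with (2 * PI * (eta / INR n) + PI) by (field; exact HN).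
  rewrite !rescale_sin_jet, rescale_Derive_n, cos_neg, cos_2PI_sin, neg_sin.
  match goal with |- context [psi ?z] => set (z' := z) end.
  set (zeta' := zeta + delta - _ - _).
  assert (Hz' : z' = zeta' / INR n + INR n) by (unfold z', zeta'; field; exact HN).
  rewrite Hz', degree_one_nat by exact psi_deg1.
  replace (2 * PI * (zeta' / INR n + INR n))
    with (2 * PI * (zeta' / INR n) + 2 * INR n * PI) by ring.
  rewrite sin_period. f_equal; f_equal; field; exact HN.
Qed.

Lemma is_lim_seq_eps_ratio delta : is_lim_seq (fun n => (INR n + delta / INR n) / INR n) 1.
Proof.
  apply (is_lim_seq_ext_loc (fun n => 1 + delta * (/ INR n * / INR n))).
  - exists 1%nat. intros n Hn. assert (INR n <> 0) by (apply not_0_INR; lia). field. assumption.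
  - assert (Hinv : is_lim_seq (fun n => / INR n) 0).
    { replace (Finite 0) with (Rbar_inv p_infty) by reflexivity.
      apply is_lim_seq_inv; [apply is_lim_seq_INR | discriminate]. }
    assert (Hlim := is_lim_seq_plus' _ _ _ _ (is_lim_seq_const 1)
                      (is_lim_seq_scal_l _ delta _ (is_lim_seq_mult' _ _ _ _ Hinv Hinv))).
    simpl in Hlim. now rewrite Rmult_0_l, Rmult_0_r, Rplus_0_r in Hlim.
Qed.

Section ScaledMapLimit.

Variables (psi : R -> R) (mu nu beta delta sg : R).
Hypothesis psi_jet : jet (Derive_n psi).
Hypothesis psi_0 : psi 0 = 0.
Hypothesis dpsi_0 : Derive_n psi 1 0 = 0.
Variable B : R3 -> Prop.
Hypothesis coord_bounded : forall i, bounded_on B (coord i).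

(** [Ck_cvg_comp] must be tried before the arithmetic rules, which would see through [rescale],
    and [Ck_cvg_minus] before [Ck_cvg_plus], which would see through [Rminus]. *)
Ltac solve_Ck_cvg :=
  repeat first
    [ apply Ck_cvg_const; first [apply is_lim_seq_const | apply is_lim_seq_eps_ratio]
    | apply (Ck_cvg_coord B coord_bounded)
    | apply Ck_cvg_comp;
        [apply jet_cvg_rescale; [first [apply jet_sin_jet | exact psi_jet]
                                |first [apply sin_jet_0 | exact psi_0]]|]
    | apply Ck_cvg_minus | apply Ck_cvg_plus | apply Ck_cvg_mult | apply Ck_cvg_pow ].

Lemma scaled_map_Ck_cvg k c :
  Ck_cvg B k (fun n p => coord c (scaled_map psi mu nu beta delta sg n p))
    (fun p => coord c (quad_limit mu nu beta delta sg p)).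
Proof.
  destruct c; (eapply (Ck_cvg_ext B k _ _ _ _ (fun n p => eq_refl));
    [| unfold scaled_map; cbn [coord]; solve_Ck_cvg]);
    intros [[xi eta] zeta]; cbn -[Derive_n]; rewrite ?sin_jet_1, ?dpsi_0; ring.
Qed.

End ScaledMapLimit.

Lemma f_star_scaled_map psi mu nu beta delta pt n q : (1 <= n)%nat ->
  (forall z, psi (z + 1) = psi z + 1) -> (forall z, psi (- z) = - psi z) ->
  f_star psi mu nu beta delta pt n q = scaled_map psi mu nu beta delta (accel_sign pt) n q.
Proof.
  intros Hn psi_deg1 psi_odd.
  destruct pt; rewrite ?f_star_Pminus, ?f_star_Qminus by exact psi_odd.
  - now apply f_star_Pplus.
  - now apply f_star_Pplus.
  - now apply f_star_Qplus.
  - now apply f_star_Qplus.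
Qed.

Lemma ball0_coord_bounded r i : bounded_on (ball0 r) (coord i).
Proof.
  exists (Rabs r). intros [[x y] z] Hp. unfold ball0 in Hp. cbn in Hp.
  apply Rsqr_le_abs_0. rewrite !Rsqr_pow2.
  pose proof (pow2_ge_0 x); pose proof (pow2_ge_0 y); pose proof (pow2_ge_0 z).
  destruct i; cbn; lra.
Qed.

(** * Conjugacy to the Michelson map *)

Ltac positivity :=
  repeat match goal with
         | |- 0 < _ * _ => apply Rmult_lt_0_compat
         | |- 0 < _ / _ => apply Rdiv_lt_0_compat
         | |- 0 < _ ^ _ => apply pow_lt
         end; lra.

Definition diag3 (a b c : R) (i j : idx3) : R :=
  match i, j with I1, I1 => a | I2, I2 => b | I3, I3 => c | _, _ => 0 end.

Lemma lin3_diag3 a b c p : lin3 (diag3 a b c) p = (a * coord I1 p, b * coord I2 p, c * coord I3 p).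
Proof. unfold lin3, diag3. f_equal; [f_equal|]; ring. Qed.

(** The diagonal entries are forced by the constant term of the [w]-update and by the [v]- and
    [u]-updates; the two hypotheses then match the [xi^2]- and [eta]-terms of the [w]-update. *)
Lemma quad_limit_lin_conj mu nu beta delta s phi a :
  0 < mu -> 0 < nu -> 0 < delta -> 0 < phi ->
  phi ^ 6 = 32 * PI ^ 6 * mu ^ 2 * nu ^ 2 * delta ->
  a * phi ^ 2 = 4 * PI ^ 2 * nu * s * beta ->
  lin_conj (quad_limit mu nu beta delta s) (michelson phi a).
Proof.
  intros Hmu Hnu Hdelta Hphi Hphi6 Ha.
  pose proof PI_RGT_0 as HPI.
  set (c := phi / delta).
  set (b := phi ^ 2 / (2 * PI * nu * delta)).
  set (alpha := phi ^ 3 / (4 * PI ^ 2 * mu * nu * delta)).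
  assert (Hc : 0 < c) by (unfold c; positivity).
  assert (Hb : 0 < b) by (unfold b; positivity).
  assert (Halpha : 0 < alpha) by (unfold alpha; positivity).
  assert (Hsq : phi * alpha ^ 2 = 2 * PI ^ 2 * c).
  { unfold alpha, c.
    replace (phi * (phi ^ 3 / (4 * PI ^ 2 * mu * nu * delta)) ^ 2)
      with (phi * phi ^ 6 / (16 * PI ^ 4 * mu ^ 2 * nu ^ 2 * delta ^ 2)) by (field; lra).
    rewrite Hphi6. field. lra. }
  exists (diag3 alpha b c). split.
  - replace (det3 (diag3 alpha b c)) with (alpha * b * c) by (unfold det3, diag3; ring).
    apply Rgt_not_eq. unfold Rgt. positivity.
  - intros [[xi eta] zeta]. rewrite !lin3_diag3. cbn [coord michelson quad_limit].
    assert (Hw : c * zeta + phi * (1 - (alpha * xi) ^ 2 - a * (b * eta))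
                 = c * (zeta + delta - 2 * PI ^ 2 * xi ^ 2 - 2 * PI * s * beta * eta)).
    { replace (c * zeta + phi * (1 - (alpha * xi) ^ 2 - a * (b * eta)))
        with (c * zeta + phi - (phi * alpha ^ 2) * xi ^ 2
              - (a * phi ^ 2) * phi / (2 * PI * nu * delta) * eta)
        by (unfold b; field; lra).
      rewrite Hsq, Ha. unfold c. field. lra. }
    rewrite Hw. f_equal; f_equal; unfold alpha, b, c; field; lra.
Qed.

Lemma Rpower_Rpower_inverse x u v : 0 < x -> u * v = 1 -> Rpower (Rpower x u) v = x.
Proof. intros Hx Huv. rewrite Rpower_mult, Huv. exact (Rpower_1 x Hx). Qed.

Lemma michelson_parameters mu nu delta beta : 0 < mu -> 0 < nu -> 0 < delta ->
  let phi := PI * Rpower (32 * mu ^ 2 * nu ^ 2 * delta) (/ 6) in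
  let a := beta * Rpower (2 * nu / (delta * mu ^ 2)) (/ 3) in
  0 < phi /\ phi ^ 6 = 32 * PI ^ 6 * mu ^ 2 * nu ^ 2 * delta /\
  a * phi ^ 2 = 4 * PI ^ 2 * nu * beta.
Proof.
  intros Hmu Hnu Hdelta phi a. pose proof PI_RGT_0 as HPI.
  set (X := 32 * mu ^ 2 * nu ^ 2 * delta).
  assert (HX : 0 < X) by (unfold X; positivity).
  set (root6 := Rpower X (/ 6)).
  assert (Hroot6 : 0 < root6) by apply exp_pos.
  assert (Hroot6_6 : root6 ^ 6 = X).
  { rewrite <- Rpower_pow by exact Hroot6. unfold root6.
    apply Rpower_Rpower_inverse; [exact HX | simpl; field]. }
  assert (Hroot6_2 : root6 ^ 2 = Rpower X (/ 3)).
  { rewrite <- Rpower_pow by exact Hroot6. unfold root6.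
    rewrite Rpower_mult. f_equal. simpl. field. }
  assert (Hcube : Rpower (2 * nu / (delta * mu ^ 2)) (/ 3) * Rpower X (/ 3) = 4 * nu).
  { rewrite Rpower_mult_distr by (try positivity; exact HX).
    replace (2 * nu / (delta * mu ^ 2) * X) with (Rpower (4 * nu) (INR 3))
      by (rewrite Rpower_pow by lra; unfold X; simpl; field; lra).
    apply Rpower_Rpower_inverse; [lra | simpl; field]. }
  split; [|split].
  - unfold phi. fold X root6. positivity.
  - unfold phi. fold X root6. rewrite Rpow_mult_distr, Hroot6_6. unfold X. ring.
  - unfold a, phi. fold X root6. rewrite Rpow_mult_distr, Hroot6_2.
    replace (beta * Rpower (2 * nu / (delta * mu ^ 2)) (/ 3) * (PI ^ 2 * Rpower X (/ 3)))
      with (beta * PI ^ 2 * (Rpower (2 * nu / (delta * mu ^ 2)) (/ 3) * Rpower X (/ 3))) by ring.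
    rewrite Hcube. ring.
Qed.

Theorem corollary1
  (psi : R -> R)
  (psi_analytic : real_analytic psi)
  (psi_deg1 : forall z, psi (z + 1) = psi z + 1)
  (psi_odd : forall z, psi (- z) - (- z) = - (psi z - z))
  (psi_per1 : forall z, psi (z + 1) - (z + 1) = psi z - z)
  (psi_0 : psi 0 = 0)
  (dpsi_0 : derivable_pt_lim psi 0 0)
  (mu nu delta beta : R)
  (hmu : 0 < mu) (hnu : 0 < nu) (hdelta : 0 < delta)
  (pt : accel) :
  let phi := PI * Rpower (32 * mu ^ 2 * nu ^ 2 * delta) (/ 6) in
  let a := beta * Rpower (2 * nu / (delta * mu ^ 2)) (/ 3) in
  (exists r : R, 0 < r /\
     conv_with_derivs (ball0 r) (fun n => f_star psi mu nu beta delta pt n)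
       (quad_limit mu nu beta delta (accel_sign pt)))
  /\ lin_conj (quad_limit mu nu beta delta (accel_sign pt)) (michelson phi (accel_sign pt * a)).
Proof.
  (* [psi_per1] follows from [psi_deg1]. *)
  intros phi a. split.
  - assert (psi_odd' : forall z, psi (- z) = - psi z) by (intro z; specialize (psi_odd z); lra).
    assert (dpsi_0' : Derive_n psi 1 0 = 0)
      by exact (is_derive_unique _ _ _ (proj2 (is_derive_Reals _ _ _) dpsi_0)).
    exists 1. split; [lra|]. apply conv_with_derivs_intro. intros c k.
    apply (Ck_cvg_eventually_ext _ k
             (fun n p => coord c (scaled_map psi mu nu beta delta (accel_sign pt) n p))).
    + exists 1%nat. intros n Hn. apply functional_extensionality. intro p.
      now rewrite f_star_scaled_map.
    + apply scaled_map_Ck_cvg; auto using real_analytic_jet, ball0_coord_bounded.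
  - destruct (michelson_parameters mu nu delta beta hmu hnu hdelta) as [Hphi [Hphi6 Ha]].
    apply quad_limit_lin_conj; auto.
    replace (accel_sign pt * a * phi ^ 2) with (accel_sign pt * (a * phi ^ 2)) by ring.
    unfold a, phi. rewrite Ha. ring.
Qed.
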